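(* Let $f$ and $g$ be ternary cubic forms such that $J^3[f,g,u_x^3]=0$ identically in $u$. (1) If $f_{333}\neq0$, then $g=0$ if and only if $g_{113}=g_{123}=g_{223}=g_{133}=g_{233}=g_{333}=0$. (2) If $f_{333}\neq0$ and $4f_{113}f_{223}-f_{123}^2\neq0$, then $g=0$ if and only if $g_{113}=g_{123}=g_{223}=g_{333}=0$.
   Context: A ternary cubic form is written $f=\sum_{1\le i\le j\le k\le3}f_{ijk}x_ix_jx_k$, so $f_{ijk}$ ($i\le j\le k$) is the coefficient of the monomial $x_ix_jx_k$; the same convention applies to $g_{ijk}$. The variables $u=(u_1,u_2,u_3)$ are indeterminates and $u_x=\sum u_ix_i$. The third transvectant is $J^3[f,g,h]=\big(\Omega^3(f(x)g(y)h(z))\big)|_{y=z=x}$, where $\Omega$ is the determinant of the operator matrix with rows $(\partial/\partial x_i)$, $(\partial/\partial y_i)$, $(\partial/\partial z_i)$, and $u$ is treated as constant. *)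

From HB Require Import structures.
From mathcomp Require Import all_boot all_order all_algebra all_fingroup.
From mathcomp Require Export mpoly.
Set Implicit Arguments. Unset Strict Implicit. Unset Printing Implicit Defensive.
Import GRing.Theory.
Local Open Scope ring_scope.

(* Indices 0,1,2 : 'I_3 stand for the paper's indices 1,2,3. *)
Definition o1 : 'I_3 := @Ordinal 3 0 erefl.
Definition o2 : 'I_3 := @Ordinal 3 1 erefl.
Definition o3 : 'I_3 := @Ordinal 3 2 erefl.

(* Working ring: polynomials in 12 variables
   x_1..x_3 (indices 0..2), y_1..y_3 (3..5), z_1..z_3 (6..8), u_1..u_3 (9..11). *)
Definition xv (i : 'I_3) : 'I_12 := inord i.
Definition yv (i : 'I_3) : 'I_12 := inord (3 + i).
Definition zv (i : 'I_3) : 'I_12 := inord (6 + i).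
Definition uv (i : 'I_3) : 'I_12 := inord (9 + i).

Section Transvectant.
Variable R : ringType.

Definition rename (s : 'I_12 -> 'I_12) (p : {mpoly R[12]}) : {mpoly R[12]} :=
  p \mPo [tuple 'X_(s k) | k < 12].

Definition x_to_y (k : 'I_12) : 'I_12 := if (k < 3)%N then inord (k + 3) else k.
Definition x_to_z (k : 'I_12) : 'I_12 := if (k < 3)%N then inord (k + 6) else k.
Definition yz_to_x (k : 'I_12) : 'I_12 :=
  if (3 <= k < 9)%N then inord (k %% 3) else k.

(* Cayley's Omega process: determinant of the operator matrix with rows
   (d/dx_i), (d/dy_i), (d/dz_i). *)
Definition Omega (p : {mpoly R[12]}) : {mpoly R[12]} :=
  \sum_(s : 'S_3) (-1) ^+ s *:
     mderiv (xv (s o1)) (mderiv (yv (s o2)) (mderiv (zv (s o3)) p)).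

(* Third transvectant J^3[F,G,H] = (Omega^3 (F(x) G(y) H(z)))|_{y=z=x},
   where F, G, H are given as polynomials in the x-variables (coefficients
   possibly involving u, which is treated as constant). *)
Definition J3 (F G H : {mpoly R[12]}) : {mpoly R[12]} :=
  rename yz_to_x (iter 3 Omega (F * rename x_to_y G * rename x_to_z H)).

Definition lift_x (f : {mpoly R[3]}) : {mpoly R[12]} :=
  f \mPo [tuple 'X_(xv i) | i < 3].

Definition u_x : {mpoly R[12]} := \sum_(i < 3) 'X_(uv i) * 'X_(xv i).

(* f_{ijk} : coefficient of the monomial x_i x_j x_k *)
Definition cf (f : {mpoly R[3]}) (i j k : 'I_3) : R :=
  f@_(U_(i) + U_(j) + U_(k))%MM.

End Transvectant.

(* Evaluate J^3[f, g, u_x^3] at x = y = z = 0, u = w.  Since f(x), g(y) and (u.z)^3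
   involve disjoint blocks of variables, each Omega splits into a 3x3 determinant of
   first derivatives, so the value is the contraction eps.eps.eps of the third-derivative
   tensors of f, g and (w.x)^3: a cubic form in w, bilinear in the coefficients of f
   and g.  Its values at a few integer points w give linear relations: when the
   coefficients of g involving x_3 vanish, f_333 g_ijk is such a combination for each
   remaining ijk, and when only g_113, g_123, g_223, g_333 vanish, so is
   (4 f_113 f_223 - f_123^2) g_i33. *)

From HB Require Import structures.
From mathcomp Require Import all_boot all_order all_algebra all_fingroup.
From mathcomp Require Import mpoly ring zify.
Set Implicit Arguments. Unset Strict Implicit. Unset Printing Implicit Defensive.
Import GRing.Theory Num.Theory.
Local Open Scope ring_scope.

Lemma sum_delta (R : comNzRingType) n (x : 'I_n) (G : 'I_n -> R) :
  \sum_(i < n) (x == i)%:R * G i = G x.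
Proof.
rewrite (bigD1 x) //= eqxx mul1r big1 ?addr0 // => i /negbTE.
by rewrite eq_sym => ->; rewrite mul0r.
Qed.

Lemma big_ord3 (V : nmodType) (G : 'I_3 -> V) : \sum_(i < 3) G i = G o1 + G o2 + G o3.
Proof.
by rewrite !big_ord_recr big_ord0 /= add0r; congr (G _ + G _ + G _); apply: val_inj.
Qed.

Lemma ord3P (i : 'I_3) : i = o1 \/ i = o2 \/ i = o3.
Proof.
case: i => [[|[|[|i]]] lt_i3]; last by [].
- by left; apply: val_inj.
- by right; left; apply: val_inj.
- by right; right; apply: val_inj.
Qed.

Lemma mul_pnat_eq0 (R : numDomainType) (x c : R) k :
  c != 0 -> x * (k.+1%:R * c) = 0 -> x = 0.
Proof. by move=> nz_c /eqP; rewrite !mulf_eq0 pnatr_eq0 /= (negbTE nz_c) !orbF => /eqP. Qed.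

Section MpolyCalculus.
Variable R : comNzRingType.

Lemma mderivXU n (i k : 'I_n) : ('X_i : {mpoly R[n]})^`M(k) = (i == k)%:R%:MP.
Proof.
rewrite mderivX mnm1E; case: eqP => [->|_]; last by rewrite scale0r mpolyC0.
have -> : (U_(k) - U_(k))%MM = 0%MM.
  by apply/mnmP => l; rewrite mnmBE mnm0E subnn.
by rewrite mpolyX0 scale1r mpolyC1.
Qed.

Lemma mderivM3 n (k : 'I_n) (p q r : {mpoly R[n]}) :
  (p * q * r)^`M(k) = p^`M(k) * q * r + p * q^`M(k) * r + p * q * r^`M(k).
Proof. by rewrite !mderivM; ring. Qed.

Lemma mderivXn_eq0 n (k : 'I_n) (p : {mpoly R[n]}) e :
  p^`M(k) = 0 -> (p ^+ e)^`M(k) = 0.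
Proof.
move=> dp0; elim: e => [|e IHe]; first by rewrite expr0 -mpolyC1 mderivC.
by rewrite exprS mderivM dp0 IHe mul0r mulr0 addr0.
Qed.

Lemma mderiv_comp n k (p : {mpoly R[n]}) (lq : n.-tuple {mpoly R[k]}) (j : 'I_k) :
  (p \mPo lq)^`M(j) = \sum_(i < n) (p^`M(i) \mPo lq) * (tnth lq i)^`M(j).
Proof.
pose chain q := (q \mPo lq)^`M(j) = \sum_(i < n) (q^`M(i) \mPo lq) * (tnth lq i)^`M(j).
have chainM q r : chain q -> chain r -> chain (q * r).
  rewrite /chain rmorphM /= mderivM => -> ->.
  rewrite mulr_suml mulr_sumr -big_split /=; apply: eq_bigr => i _.
  by rewrite mderivM rmorphD /= !rmorphM /=; ring.
have chain1 : chain 1.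
  rewrite /chain rmorph1 -mpolyC1 mderivC big1 // => i _.
  by rewrite mderivC rmorph0 mul0r.
have chainX i : chain 'X_i.
  rewrite /chain comp_mpolyXU -tnth_nth.
  under eq_bigr do rewrite mderivXU comp_mpolyC rmorph_nat.
  by rewrite sum_delta.
elim/mpolyind: p => [|c m p _ _ IH].
  by rewrite rmorph0 mderiv0 big1 // => i _; rewrite mderiv0 rmorph0 mul0r.
rewrite comp_mpolyD mderivD IH comp_mpolyZ mderivZ.
have -> : ('X_[m] \mPo lq)^`M(j) = \sum_(i < n) ('X_[m]^`M(i) \mPo lq) * (tnth lq i)^`M(j).
  rewrite mpolyXE_id; apply: (big_ind chain) => // i _.
  by elim: (m i) => [|e IHe]; rewrite ?expr0 // exprS; apply: chainM.
rewrite scaler_sumr -big_split /=; apply: eq_bigr => i _.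
by rewrite mderivD mderivZ comp_mpolyD comp_mpolyZ mulrDl scalerAl.
Qed.

Lemma comp_mpolyA n k l (p : {mpoly R[n]}) (lq : n.-tuple {mpoly R[k]})
    (lr : k.-tuple {mpoly R[l]}) :
  (p \mPo lq) \mPo lr = p \mPo [tuple tnth lq i \mPo lr | i < n].
Proof.
elim/mpolyind: p => [|c m p _ _ IH]; first by rewrite !comp_mpoly0.
rewrite !comp_mpolyD !comp_mpolyZ IH !comp_mpolyX rmorph_prod.
by congr (_ *: _ + _); apply: eq_bigr => i _; rewrite rmorphXn tnth_mktuple.
Qed.

Lemma meval0_mcoeff n (p : {mpoly R[n]}) : p.@[fun _ => 0] = p@_0.
Proof.
elim/mpolyind: p => [|c m p _ _ IH]; first by rewrite meval0 mcoeff0.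
rewrite mevalD mcoeffD IH mevalZ mcoeffZ mevalX mcoeffX; congr (c * _ + _).
have [-> | nz_m] := eqVneq m 0%MM.
  by rewrite big1 // => i _; rewrite mnm0E expr0.
have [i nz_mi] : exists i, m i != 0%N.
  by apply/existsP; apply: contraNT nz_m; rewrite negb_exists => /forallP z;
     apply/eqP/mnmP => i; rewrite mnm0E; apply/eqP/negPn/z.
by rewrite (bigD1 i) //= expr0n (negbTE nz_mi) mul0r.
Qed.

Lemma mcoeff0_mderivm n (p : {mpoly R[n]}) m :
  (p^`M[m])@_0 = p@_m *+ \prod_(i < n) (m i)`!.
Proof.
rewrite mcoeff_mderivm addm0; congr (_ *+ _).
by apply: eq_bigr => i _; rewrite ffactnn.
Qed.

Definition mrename n m (s : 'I_n -> 'I_m) (p : {mpoly R[n]}) : {mpoly R[m]} :=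
  p \mPo [tuple 'X_(s i) | i < n].

Section Rename.
Variables (n m : nat) (s : 'I_n -> 'I_m).

Lemma mrenameX i : mrename s ('X_i : {mpoly R[n]}) = 'X_(s i).
Proof. by rewrite /mrename comp_mpolyXU -tnth_nth tnth_mktuple. Qed.

Lemma eq_mrename (t : 'I_n -> 'I_m) p : s =1 t -> mrename s p = mrename t p.
Proof. by move=> eq_st; congr (_ \mPo _); apply: eq_mktuple => i; rewrite eq_st. Qed.

Lemma mrename_comp l (t : 'I_l -> 'I_n) p :
  mrename s (mrename t p) = mrename (s \o t) p.
Proof.
rewrite /mrename comp_mpolyA; congr (_ \mPo _); apply: eq_mktuple => i.
by rewrite tnth_mktuple -/(mrename s _) mrenameX.
Qed.

Lemma meval_mrename (v : 'I_m -> R) p : (mrename s p).@[v] = p.@[v \o s].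
Proof.
by rewrite comp_mpoly_meval; apply: meval_eq => i; rewrite tnth_mktuple mevalXU.
Qed.

Lemma mderiv_mrename p k :
  (mrename s p)^`M(k) = \sum_(i | s i == k) mrename s (p^`M(i)).
Proof.
rewrite mderiv_comp [RHS]big_mkcond; apply: eq_bigr => i _ /=.
by rewrite tnth_mktuple mderivXU rmorph_nat mulr_natr; case: eqP.
Qed.

Lemma mderiv_mrename_inj p a :
  injective s -> (mrename s p)^`M(s a) = mrename s (p^`M(a)).
Proof.
by move=> inj_s; rewrite mderiv_mrename (big_pred1 a) // => i; rewrite inj_eq.
Qed.

Lemma mderiv_mrename_eq0 p k :
  (forall i, s i = k -> p^`M(i) = 0) -> (mrename s p)^`M(k) = 0.
Proof.
move=> dp0; rewrite mderiv_mrename big1 // => i /eqP /dp0 ->.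
by rewrite /mrename comp_mpoly0.
Qed.

End Rename.
End MpolyCalculus.

Definition eps_sum (V : zmodType) (F : 'I_3 -> 'I_3 -> 'I_3 -> V) : V :=
  F o1 o2 o3 - F o1 o3 o2 - F o2 o1 o3 + F o2 o3 o1 + F o3 o1 o2 - F o3 o2 o1.

Lemma eq_eps_sum (V : zmodType) (F G : 'I_3 -> 'I_3 -> 'I_3 -> V) :
  (forall a b c, F a b c = G a b c) -> eps_sum F = eps_sum G.
Proof. by move=> eqFG; rewrite /eps_sum !eqFG. Qed.

Lemma eps_sum_morph (V W : zmodType) (f : V -> W) (F : 'I_3 -> 'I_3 -> 'I_3 -> V) :
  {morph f : x y / x + y} -> {morph f : x / - x} ->
  f (eps_sum F) = eps_sum (fun a b c => f (F a b c)).
Proof. by move=> fD fN; rewrite /eps_sum !fD !fN. Qed.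

Section Permutations3.
Variable R : comNzRingType.

Lemma det_mx33 (A : 'M[R]_3) : \det A =
  A o1 o1 * A o2 o2 * A o3 o3 - A o1 o1 * A o2 o3 * A o3 o2
  - A o1 o2 * A o2 o1 * A o3 o3 + A o1 o2 * A o2 o3 * A o3 o1
  + A o1 o3 * A o2 o1 * A o3 o2 - A o1 o3 * A o2 o2 * A o3 o1.
Proof.
rewrite !(expand_det_row _ ord0) !big_ord_recr big_ord0 /cofactor /=.
rewrite !(expand_det_row _ ord0) !big_ord_recr !big_ord0 /cofactor /=.
rewrite !det_mx11 !mxE /= !expr0 !expr1.
(* Indexing every entry by the numeric values of its indices makes the ordinals
   produced by the expansion syntactically comparable with o1, o2, o3. *)
pose B (a b : nat) := A (inord a) (inord b).
have toB i j : A i j = B i j by rewrite /B !inord_val.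
by rewrite !toB /=; ring.
Qed.

Definition unit_rows (i j k : 'I_3) : 'M[R]_3 :=
  \matrix_(r, c) (c == nth i [:: i; j; k] r)%:R.

Lemma prod_unit_rows (s : 'S_3) i j k :
  \prod_r unit_rows i j k r (s r) = (s o1 == i)%:R * (s o2 == j)%:R * (s o3 == k)%:R.
Proof.
rewrite !big_ord_recl big_ord0 !mxE /= mulr1 mulrA.
by congr ((s _ == _)%:R * (s _ == _)%:R * (s _ == _)%:R); apply: val_inj.
Qed.

Lemma sum_perm3 (F : 'I_3 -> 'I_3 -> 'I_3 -> R) :
  \sum_(s : 'S_3) (-1) ^+ s * F (s o1) (s o2) (s o3) = eps_sum F.
Proof.
have expandF (s : 'S_3) : F (s o1) (s o2) (s o3) =
    \sum_i \sum_j \sum_k F i j k * \prod_r unit_rows i j k r (s r).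
  have reorder (a b c x : R) : x * (a * b * c) = c * (b * (a * x)) by ring.
  under eq_bigr do under eq_bigr do under eq_bigr do
    rewrite prod_unit_rows reorder.
  by under eq_bigr do under eq_bigr do rewrite sum_delta;
     under eq_bigr do rewrite sum_delta; rewrite sum_delta.
rewrite (eq_bigr _ (fun s _ => congr1 _ (expandF s))).
have pull_sum (I : finType) (c : 'S_3 -> R) (X : 'S_3 -> I -> R) :
    \sum_s c s * \sum_i X s i = \sum_i \sum_s c s * X s i.
  by rewrite exchange_big; apply: eq_bigr => s _; rewrite mulr_sumr.
rewrite pull_sum; under eq_bigr do rewrite pull_sum.
under eq_bigr do under eq_bigr do rewrite pull_sum.
transitivity (\sum_i \sum_j \sum_k F i j k * \det (unit_rows i j k)).
  do 3 (apply: eq_bigr => ? _); rewrite /determinant mulr_sumr.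
  by apply: eq_bigr => s _; rewrite mulrCA.
rewrite !big_ord3 !det_mx33 !mxE /=.
by rewrite /eps_sum; ring.
Qed.

End Permutations3.

Definition block (k : 'I_12) : nat := k %/ 3.

Lemma val_xv i : xv i = i :> nat.
Proof. by rewrite /xv inordK // (leq_trans (ltn_ord i)). Qed.
Lemma val_yv i : yv i = (3 + i)%N :> nat.
Proof. by rewrite /yv inordK //; have := ltn_ord i; lia. Qed.
Lemma val_zv i : zv i = (6 + i)%N :> nat.
Proof. by rewrite /zv inordK //; have := ltn_ord i; lia. Qed.
Lemma val_uv i : uv i = (9 + i)%N :> nat.
Proof. by rewrite /uv inordK //; have := ltn_ord i; lia. Qed.

Lemma block_xv i : block (xv i) = 0%N.
Proof. by rewrite /block val_xv divn_small. Qed.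
Lemma block_yv i : block (yv i) = 1%N.
Proof. by rewrite /block val_yv; have := ltn_ord i; lia. Qed.
Lemma block_zv i : block (zv i) = 2%N.
Proof. by rewrite /block val_zv; have := ltn_ord i; lia. Qed.
Lemma block_uv i : block (uv i) = 3%N.
Proof. by rewrite /block val_uv; have := ltn_ord i; lia. Qed.

Lemma xv_inj : injective xv.
Proof. by move=> i j /(congr1 val); rewrite /= !val_xv => /val_inj. Qed.
Lemma yv_inj : injective yv.
Proof.
by move=> i j /(congr1 val); rewrite /= !val_yv => /eqP; rewrite eqn_add2l => /eqP /val_inj.
Qed.
Lemma zv_inj : injective zv.
Proof.
by move=> i j /(congr1 val); rewrite /= !val_zv => /eqP; rewrite eqn_add2l => /eqP /val_inj.
Qed.

Lemma x_to_y_xv i : x_to_y (xv i) = yv i.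
Proof.
by apply: ord_inj; rewrite /x_to_y val_xv ltn_ord val_yv inordK addnC //; have := ltn_ord i; lia.
Qed.
Lemma x_to_z_xv i : x_to_z (xv i) = zv i.
Proof.
by apply: ord_inj; rewrite /x_to_z val_xv ltn_ord val_zv inordK addnC //; have := ltn_ord i; lia.
Qed.
Lemma x_to_z_uv i : x_to_z (uv i) = uv i.
Proof. by rewrite /x_to_z val_uv. Qed.

Section Omega.
Variable R : comNzRingType.
Implicit Types p A B C : {mpoly R[12]}.

Definition free_of (bs : seq nat) p := forall k, block k \in bs -> p^`M(k) = 0.

Lemma free_of_mderiv bs p j : free_of bs p -> free_of bs p^`M(j).
Proof. by move=> p_free k /p_free dp0; rewrite mderiv_comm dp0 mderiv0. Qed.

Lemma OmegaD : {morph @Omega R : p q / p + q}.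
Proof.
move=> p q; rewrite /Omega -big_split; apply: eq_bigr => s _.
by rewrite !mderivD scalerDr.
Qed.

Lemma OmegaN : {morph @Omega R : p / - p}.
Proof.
by move=> p; rewrite /Omega -sumrN; apply: eq_bigr => s _; rewrite !mderivN scalerN.
Qed.

Lemma Omega_sep A B C :
  free_of [:: 1; 2]%N A -> free_of [:: 0; 2]%N B -> free_of [:: 0; 1]%N C ->
  Omega (A * B * C) = eps_sum (fun a b c => A^`M(xv a) * B^`M(yv b) * C^`M(zv c)).
Proof.
move=> A_free B_free C_free; rewrite /Omega -sum_perm3; apply: eq_bigr => s _.
have Cz_free := free_of_mderiv (zv (s o3)) C_free.
have By_free := free_of_mderiv (yv (s o2)) B_free.
suff -> : (A * B * C)^`M(zv (s o3))^`M(yv (s o2))^`M(xv (s o1)) =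
    A^`M(xv (s o1)) * B^`M(yv (s o2)) * C^`M(zv (s o3)).
  by rewrite scaler_sign mulr_sign.
rewrite mderivM3 (A_free (zv _)) ?block_zv // (B_free (zv _)) ?block_zv //.
rewrite !(mul0r, mulr0, add0r) mderivM3 (A_free (yv _)) ?block_yv //.
rewrite (Cz_free (yv _)) ?block_yv // !(mul0r, mulr0, add0r, addr0) mderivM3.
rewrite (By_free (xv _)) ?block_xv // (Cz_free (xv _)) ?block_xv //.
by rewrite !(mul0r, mulr0, add0r, addr0).
Qed.

Lemma Omega3_sep A B C :
  free_of [:: 1; 2]%N A -> free_of [:: 0; 2]%N B -> free_of [:: 0; 1]%N C ->
  iter 3 (@Omega R) (A * B * C) =
  eps_sum (fun a b c => eps_sum (fun a' b' c' => eps_sum (fun a'' b'' c'' =>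
    A^`M(xv a)^`M(xv a')^`M(xv a'') * B^`M(yv b)^`M(yv b')^`M(yv b'')
    * C^`M(zv c)^`M(zv c')^`M(zv c'')))).
Proof.
move=> A_free B_free C_free /=.
rewrite Omega_sep // !(eps_sum_morph _ OmegaD OmegaN); apply: eq_eps_sum => a b c.
rewrite Omega_sep; try by do ?apply: free_of_mderiv.
rewrite (eps_sum_morph _ OmegaD OmegaN); apply: eq_eps_sum => a' b' c'.
by rewrite Omega_sep; try by do ?apply: free_of_mderiv.
Qed.

End Omega.

Section Evaluation.
Variable R : comNzRingType.

Definition upoint (w : 'I_3 -> R) (k : 'I_12) : R :=
  if block k == 3%N then w (inord (k - 9)) else 0.

Lemma upoint_uv w i : upoint w (uv i) = w i.
Proof. by rewrite /upoint block_uv val_uv addKn inord_val. Qed.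

Lemma upoint_eq0 w k : (block k < 3)%N -> upoint w k = 0.
Proof. by rewrite /upoint; case: eqP => // ->. Qed.

Lemma upoint_yz_to_x w k : upoint w (yz_to_x k) = upoint w k.
Proof.
rewrite /yz_to_x; case: ifP => // /andP [k_ge3 k_lt9].
by rewrite !upoint_eq0 // /block ?inordK; lia.
Qed.

Definition d3 (f : {mpoly R[3]}) (a b c : 'I_3) : R := (f^`M(a)^`M(b)^`M(c))@_0.

Lemma meval_mrename_d3 (s : 'I_3 -> 'I_12) (v : 'I_12 -> R) f a b c :
  injective s -> (forall i, v (s i) = 0) ->
  ((mrename s f)^`M(s a)^`M(s b)^`M(s c)).@[v] = d3 f a b c.
Proof.
move=> inj_s v0; rewrite !mderiv_mrename_inj // meval_mrename /d3 -meval0_mcoeff.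
by apply: meval_eq => i; rewrite /= v0.
Qed.

Lemma free_of_mrename bs (s : 'I_3 -> 'I_12) (f : {mpoly R[3]}) :
  (forall i, block (s i) \notin bs) -> free_of bs (mrename s f).
Proof.
move=> s_out k k_in; apply: mderiv_mrename_eq0 => i si_k.
by move: (s_out i); rewrite si_k k_in.
Qed.

Definition uz : {mpoly R[12]} := \sum_(i < 3) 'X_(uv i) * 'X_(zv i).

Lemma rename_u_x : rename x_to_z (u_x R) = uz.
Proof.
rewrite /rename /u_x rmorph_sum; apply: eq_bigr => i _.
by rewrite rmorphM /= !comp_mpolyXU -!tnth_nth !tnth_mktuple x_to_z_uv x_to_z_xv.
Qed.

Lemma mderiv_uv_zv i a : ('X_(uv i) : {mpoly R[12]})^`M(zv a) = 0.
Proof.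
rewrite mderivXU; suff -> : (uv i == zv a) = false by rewrite mpolyC0.
by apply/eqP => /(congr1 block); rewrite block_uv block_zv.
Qed.

Lemma mderiv_uz_zv a : uz^`M(zv a) = 'X_(uv a).
Proof.
rewrite /uz raddf_sum /=.
under eq_bigr do rewrite mderivM mderiv_uv_zv mderivXU (inj_eq zv_inj) mul0r add0r
  rmorph_nat mulrC eq_sym.
exact: sum_delta.
Qed.

Lemma free_of_uz : free_of [:: 0; 1]%N uz.
Proof.
move=> k k_in; rewrite /uz raddf_sum big1 // => i _.
have [uk zk] : (uv i == k) = false /\ (zv i == k) = false.
  by split; apply/eqP => eq_k; move: k_in; rewrite -eq_k ?block_uv ?block_zv.
by rewrite /= mderivM !mderivXU uk zk mpolyC0 mul0r mulr0 addr0.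
Qed.

Lemma meval_uz w : uz.@[upoint w] = 0.
Proof.
rewrite rmorph_sum big1 // => i _.
by rewrite rmorphM /= !mevalXU (upoint_eq0 _ (k := zv i)) ?block_zv ?mulr0.
Qed.

Lemma meval_d3_uz3 w a b c :
  ((uz ^+ 3)^`M(zv a)^`M(zv b)^`M(zv c)).@[upoint w] = 6 * (w a * w b * w c).
Proof.
rewrite -[3%N]/(1 + 1 + 1)%N !exprD expr1.
rewrite !(mderivM3, mderivD, mderiv_uz_zv, mderiv_uv_zv).
rewrite !(rmorphD, rmorphM, rmorph0) /= meval_uz !mevalXU !upoint_uv.
ring.
Qed.

Definition tv3 (F G H : 'I_3 -> 'I_3 -> 'I_3 -> R) : R :=
  eps_sum (fun a b c => eps_sum (fun a' b' c' => eps_sum (fun a'' b'' c'' =>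
    F a a' a'' * G b b' b'' * H c c' c''))).

Lemma eq_tv3 F F' G G' H :
  (forall a b c, F a b c = F' a b c) -> (forall a b c, G a b c = G' a b c) ->
  tv3 F G H = tv3 F' G' H.
Proof.
move=> eqF eqG; apply: eq_eps_sum => a b c; apply: eq_eps_sum => a' b' c'.
by apply: eq_eps_sum => a'' b'' c''; rewrite eqF eqG.
Qed.

Lemma meval_J3 (f g : {mpoly R[3]}) (w : 'I_3 -> R) :
  (J3 (lift_x f) (lift_x g) (u_x R ^+ 3)).@[upoint w] =
  tv3 (d3 f) (d3 g) (fun a b c => 6 * (w a * w b * w c)).
Proof.
rewrite /J3.
have renameE s p : rename s p = mrename s p by [].
have -> : rename x_to_y (lift_x g) = mrename yv g.
  by rewrite renameE mrename_comp; apply: eq_mrename => i; exact: x_to_y_xv.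
have -> : rename x_to_z (u_x R ^+ 3) = uz ^+ 3.
  by rewrite -rename_u_x /rename rmorphXn.
rewrite renameE meval_mrename (meval_eq _ (upoint_yz_to_x w)).
rewrite Omega3_sep; first last.
- by move=> k /free_of_uz; apply: mderivXn_eq0.
- by apply: free_of_mrename => i; rewrite block_yv.
- by apply: free_of_mrename => i; rewrite block_xv.
rewrite (eps_sum_morph _ (mevalD _) (mevalN _)); apply: eq_eps_sum => a b c.
rewrite (eps_sum_morph _ (mevalD _) (mevalN _)); apply: eq_eps_sum => a' b' c'.
rewrite (eps_sum_morph _ (mevalD _) (mevalN _)); apply: eq_eps_sum => a'' b'' c''.
rewrite !mevalM meval_d3_uz3 !meval_mrename_d3 //.
- exact: xv_inj.
- by move=> i; rewrite upoint_eq0 ?block_xv.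
- exact: yv_inj.
- by move=> i; rewrite upoint_eq0 ?block_yv.
Qed.

End Evaluation.

(* Written with [Nat.add] rather than [addn] so that it computes under [simpl]. *)
Definition cnt3 (a b c i : 'I_3) : nat := ((a == i) + (b == i) + (c == i))%coq_nat.

Definition mk3 (n1 n2 n3 : nat) : 'X_{1..3} :=
  (U_(o1) *+ n1 + U_(o2) *+ n2 + U_(o3) *+ n3)%MM.

Lemma mnm3E a b c :
  (U_(a) + U_(b) + U_(c))%MM = mk3 (cnt3 a b c o1) (cnt3 a b c o2) (cnt3 a b c o3).
Proof.
apply/mnmP => i; rewrite /mk3 /cnt3 !mnmDE !mulmnE !mnm1E !plusE.
by have [->|[->|->]] := ord3P i; rewrite /=; lia.
Qed.

Section Polarization.
Variable R : comNzRingType.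

(* Third-derivative tensor of the cubic form whose coefficient of x_i x_j x_k
   (i <= j <= k) is C i j k; the entry only depends on the multiset {a, b, c}. *)
Definition polar3 (C : 'I_3 -> 'I_3 -> 'I_3 -> R) (a b c : 'I_3) : R :=
  match cnt3 a b c o1, cnt3 a b c o2 with
  | 3, _ => C o1 o1 o1 *+ 6
  | 2, 1 => C o1 o1 o2 *+ 2
  | 2, _ => C o1 o1 o3 *+ 2
  | 1, 2 => C o1 o2 o2 *+ 2
  | 1, 1 => C o1 o2 o3
  | 1, _ => C o1 o3 o3 *+ 2
  | _, 3 => C o2 o2 o2 *+ 6
  | _, 2 => C o2 o2 o3 *+ 2
  | _, 1 => C o2 o3 o3 *+ 2
  | _, _ => C o3 o3 o3 *+ 6
  end%N.

Lemma d3_polar3 (f : {mpoly R[3]}) a b c : d3 f a b c = polar3 (cf f) a b c.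
Proof.
have -> : d3 f a b c = (f^`M[U_(a) + U_(b) + U_(c)])@_0.
  by rewrite !mderivmDm !mderivmU1m.
rewrite mcoeff0_mderivm !big_ord_recr big_ord0 /= !mnmDE !mnm1E /cf.
have [->|[->|->]] := ord3P a; have [->|[->|->]] := ord3P b; have [->|[->|->]] := ord3P c;
  rewrite /polar3 !mnm3E /cnt3 /=;
  by first [congr (_ *+ _) | rewrite -[RHS]mulr1n; congr (_ *+ _)].
Qed.

End Polarization.

Section Kernel.
Variables (R : numDomainType) (C D : 'I_3 -> 'I_3 -> 'I_3 -> R).

Definition vec3 (x y z : R) (i : 'I_3) : R := nth 0 [:: x; y; z] i.

Hypothesis tv3_eq0 : forall w : 'I_3 -> R,
  tv3 (polar3 C) (polar3 D) (fun a b c => 6 * (w a * w b * w c)) = 0.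

Let P x y z := tv3 (polar3 C) (polar3 D)
  (fun a b c => 6 * (vec3 x y z a * vec3 x y z b * vec3 x y z c)).

Let P0 x y z : P x y z = 0. Proof. exact: tv3_eq0. Qed.

(* P x y z is a cubic form in (x, y, z); each identity below combines values of it
   at small integer points so as to isolate one coefficient of D. *)
Lemma kernel_pure :
  C o3 o3 o3 != 0 ->
  D o1 o1 o3 = 0 -> D o1 o2 o3 = 0 -> D o2 o2 o3 = 0 ->
  D o1 o3 o3 = 0 -> D o2 o3 o3 = 0 -> D o3 o3 o3 = 0 ->
  [/\ D o1 o1 o1 = 0, D o1 o1 o2 = 0, D o1 o2 o2 = 0 & D o2 o2 o2 = 0].
Proof.
move=> nz_C333 D113 D123 D223 D133 D233 D333.
pose D_zero := (D113, D123, D223, D133, D233, D333).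
have e111 : D o1 o1 o1 * (215.+1%:R * C o3 o3 o3) = P 0 1 0.
  by rewrite /P /tv3 /eps_sum /polar3 /cnt3 /vec3 /= ?D_zero; ring.
have e112 : D o1 o1 o2 * (431.+1%:R * C o3 o3 o3) =
    2%:R * P 1 0 0 - P 1 1 0 - P 1 (-1) 0.
  by rewrite /P /tv3 /eps_sum /polar3 /cnt3 /vec3 /= ?D_zero; ring.
have e122 : D o1 o2 o2 * (431.+1%:R * C o3 o3 o3) =
    P 1 1 0 - P 1 (-1) 0 - 2%:R * P 0 1 0.
  by rewrite /P /tv3 /eps_sum /polar3 /cnt3 /vec3 /= ?D_zero; ring.
have e222 : D o2 o2 o2 * (215.+1%:R * C o3 o3 o3) = - P 1 0 0.
  by rewrite /P /tv3 /eps_sum /polar3 /cnt3 /vec3 /= ?D_zero; ring.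
rewrite !P0 ?(mulr0, subr0, oppr0) in e111 e112 e122 e222.
by split; [exact: mul_pnat_eq0 nz_C333 e111 | exact: mul_pnat_eq0 nz_C333 e112
          | exact: mul_pnat_eq0 nz_C333 e122 | exact: mul_pnat_eq0 nz_C333 e222].
Qed.

Lemma kernel_mixed :
  4 * C o1 o1 o3 * C o2 o2 o3 - C o1 o2 o3 ^+ 2 != 0 ->
  D o1 o1 o3 = 0 -> D o1 o2 o3 = 0 -> D o2 o2 o3 = 0 -> D o3 o3 o3 = 0 ->
  D o1 o3 o3 = 0 /\ D o2 o3 o3 = 0.
Proof.
move=> nz_disc D113 D123 D223 D333.
pose D_zero := (D113, D123, D223, D333).
have e133 :
    D o1 o3 o3 * (143.+1%:R * (4 * C o1 o1 o3 * C o2 o2 o3 - C o1 o2 o3 ^+ 2)) =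
    (C o1 o1 o3 + C o1 o2 o3) * P 1 1 0 + (C o1 o2 o3 - C o1 o1 o3) * P 1 (-1) 0
    + (6 * C o2 o2 o3 + 6 * C o3 o3 o3 - 2 * C o1 o1 o3) * P 0 1 0
    - 2 * C o1 o2 o3 * P 1 0 0 - 3 * C o3 o3 o3 * P 0 1 1 - 3 * C o3 o3 o3 * P 0 1 (-1).
  by rewrite /P /tv3 /eps_sum /polar3 /cnt3 /vec3 /= ?D_zero; ring.
have e233 :
    D o2 o3 o3 * (143.+1%:R * (4 * C o1 o1 o3 * C o2 o2 o3 - C o1 o2 o3 ^+ 2)) =
    3 * C o3 o3 o3 * P 1 0 1 + 3 * C o3 o3 o3 * P 1 0 (-1)
    + (2 * C o2 o2 o3 - 6 * C o3 o3 o3 - 6 * C o1 o1 o3) * P 1 0 0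
    - (C o1 o2 o3 + C o2 o2 o3) * P 1 1 0 + (C o1 o2 o3 - C o2 o2 o3) * P 1 (-1) 0
    + 2 * C o1 o2 o3 * P 0 1 0.
  by rewrite /P /tv3 /eps_sum /polar3 /cnt3 /vec3 /= ?D_zero; ring.
rewrite !P0 ?(mulr0, subr0, addr0, oppr0) in e133 e233.
by split; [exact: mul_pnat_eq0 nz_disc e133 | exact: mul_pnat_eq0 nz_disc e233].
Qed.

End Kernel.
Lemma cubic_eq0 (R : comNzRingType) (g : {mpoly R[3]}) : g \is 3.-homog ->
  cf g o1 o1 o1 = 0 -> cf g o1 o1 o2 = 0 -> cf g o1 o1 o3 = 0 -> cf g o1 o2 o2 = 0 ->
  cf g o1 o2 o3 = 0 -> cf g o1 o3 o3 = 0 -> cf g o2 o2 o2 = 0 -> cf g o2 o2 o3 = 0 ->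
  cf g o2 o3 o3 = 0 -> cf g o3 o3 o3 = 0 -> g = 0.
Proof.
move=> g3 g111 g112 g113 g122 g123 g133 g222 g223 g233 g333.
apply/mpolyP => m; rewrite mcoeff0.
have [deg3 | ndeg3] := eqVneq (mdeg m) 3%N; last exact: dhomog_nemf_coeff g3 ndeg3.
have m_eq a b c : m o1 = (U_(a) + U_(b) + U_(c))%MM o1 ->
    m o2 = (U_(a) + U_(b) + U_(c))%MM o2 -> m o3 = (U_(a) + U_(b) + U_(c))%MM o3 ->
    m = (U_(a) + U_(b) + U_(c))%MM.
  by move=> e1 e2 e3; apply/mnmP => i; have [->|[->|->]] := ord3P i.
move: deg3; rewrite mdegE big_ord3.
move: (m o1) (m o2) (m o3) m_eq => [|[|[|[|n1]]]] [|[|[|[|n2]]]] [|[|[|[|n3]]]] m_eq deg3;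
  try lia.
(* [exact] before [done]: [done] would try every coefficient hypothesis, comparing
   monomials by computation. *)
- rewrite (m_eq o3 o3 o3) ?mnmDE ?mnm1E; first [exact: g333 | done].
- rewrite (m_eq o2 o3 o3) ?mnmDE ?mnm1E; first [exact: g233 | done].
- rewrite (m_eq o2 o2 o3) ?mnmDE ?mnm1E; first [exact: g223 | done].
- rewrite (m_eq o2 o2 o2) ?mnmDE ?mnm1E; first [exact: g222 | done].
- rewrite (m_eq o1 o3 o3) ?mnmDE ?mnm1E; first [exact: g133 | done].
- rewrite (m_eq o1 o2 o3) ?mnmDE ?mnm1E; first [exact: g123 | done].
- rewrite (m_eq o1 o2 o2) ?mnmDE ?mnm1E; first [exact: g122 | done].
- rewrite (m_eq o1 o1 o3) ?mnmDE ?mnm1E; first [exact: g113 | done].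
- rewrite (m_eq o1 o1 o2) ?mnmDE ?mnm1E; first [exact: g112 | done].
- rewrite (m_eq o1 o1 o1) ?mnmDE ?mnm1E; first [exact: g111 | done].
Qed.

Theorem lemma7p5 (R : numClosedFieldType) (f g : {mpoly R[3]}) :
  f \is 3.-homog -> g \is 3.-homog ->
  J3 (lift_x f) (lift_x g) (u_x R ^+ 3) = 0 ->
  (cf f o3 o3 o3 != 0 ->
     (g = 0 <-> (cf g o1 o1 o3 = 0 /\ cf g o1 o2 o3 = 0 /\ cf g o2 o2 o3 = 0 /\
                    cf g o1 o3 o3 = 0 /\ cf g o2 o3 o3 = 0 /\ cf g o3 o3 o3 = 0)))
  /\
  (cf f o3 o3 o3 != 0 ->
   4 * cf f o1 o1 o3 * cf f o2 o2 o3 - cf f o1 o2 o3 ^+ 2 != 0 ->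
     (g = 0 <-> (cf g o1 o1 o3 = 0 /\ cf g o1 o2 o3 = 0 /\
                    cf g o2 o2 o3 = 0 /\ cf g o3 o3 o3 = 0))).
Proof.
(* Only the cubic coefficients of f enter, so its homogeneity is not needed. *)
move=> _ g3 J3_eq0.
have tv3_eq0 w :
    tv3 (polar3 (cf f)) (polar3 (cf g)) (fun a b c => 6 * (w a * w b * w c)) = 0.
  by rewrite -(eq_tv3 _ (d3_polar3 f) (d3_polar3 g)) -meval_J3 J3_eq0 meval0.
have coeff0 a b c : g = 0 -> cf g a b c = 0 by move->; rewrite /cf mcoeff0.
split=> [nz_f333 | nz_f333 nz_disc]; split=> [g0 | ]; do ?split; try exact: coeff0.
- move=> [g113 [g123 [g223 [g133 [g233 g333]]]]].
  have [g111 g112 g122 g222] := kernel_pure tv3_eq0 nz_f333 g113 g123 g223 g133 g233 g333.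
  exact: cubic_eq0 g3 g111 g112 g113 g122 g123 g133 g222 g223 g233 g333.
- move=> [g113 [g123 [g223 g333]]].
  have [g133 g233] := kernel_mixed tv3_eq0 nz_disc g113 g123 g223 g333.
  have [g111 g112 g122 g222] := kernel_pure tv3_eq0 nz_f333 g113 g123 g223 g133 g233 g333.
  exact: cubic_eq0 g3 g111 g112 g113 g122 g123 g133 g222 g223 g233 g333.
Qed.
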